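(* Let $n=2^\alpha\prod_{i=1}^{k}p_i^{t_i}$, where $\alpha\ge 0$ is an integer, $k\ge 1$, $p_1,\dots,p_k$ are distinct odd primes and $t_1,\dots,t_k\ge 1$ are integers. Then the lattice $\widetilde\Pi(D_n)$ contains a sublattice isomorphic to the pentagon lattice $N_5$ if and only if either $\alpha\ge 2$, or $\alpha=1$ and $k\ge 2$.
   Context: For a positive integer $n$, $D_n=\langle r,s\mid r^n=e,\ s^2=e,\ srs^{-1}=r^{-1}\rangle$ is the dihedral group of order $2n$. For a finite group $G$ and a subgroup $H\le G$, let $\pi_e(H)=\{o(x)\mid x\in H\}$. Let $\mathcal{L}(G)$ be the set of subgroups of $G$; define $H_1\equiv H_2$ iff $\pi_e(H_1)=\pi_e(H_2)$, with class $[H]$. The poset $\widetilde\Pi(G)$ is $\mathcal{L}(G)/\!\equiv$ ordered by $[H_1]\lesssim[H_2]$ iff $\pi_e(H_1)\subseteq\pi_e(H_2)$; for $G=D_n$ it is a lattice. $N_5$ is the five-element lattice $\{0,a,b,c,1\}$ with $0<a<b<1$, $0<c<1$, and $c$ incomparable to $a$ and $b$. *)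

From mathcomp Require Import all_boot all_fingroup all_solvable.
Set Implicit Arguments.
Unset Strict Implicit.
Unset Printing Implicit Defensive.
Local Open Scope group_scope.

(* The paper's D_n (order 2n) is MathComp's 'D_(n.*2) (extremal.v),
   valid for 2n >= 4. *)
Notation Dih n := ('D_(n.*2))%type.

Definition piE (gT : finGroupType) (H : {set gT}) : seq nat :=
  [seq #[x] | x in H].

Definition piE_le (gT : finGroupType) (H1 H2 : {set gT}) : Prop :=
  {subset piE H1 <= piE H2}.

Definition isJoinPi (gT : finGroupType) (G A B K : {group gT}) : Prop :=
  [/\ piE_le A K, piE_le B K &
      forall L : {group gT}, L \subset G -> piE_le A L -> piE_le B L -> piE_le K L].

Definition isMeetPi (gT : finGroupType) (G A B K : {group gT}) : Prop :=
  [/\ piE_le K A, piE_le K B &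
      forall L : {group gT}, L \subset G -> piE_le L A -> piE_le L B -> piE_le L K].

Inductive N5 := N5_0 | N5_a | N5_b | N5_c | N5_1.

Definition N5_le (x y : N5) : bool :=
  match x, y with
  | N5_0, _ => true
  | _, N5_1 => true
  | N5_a, N5_a | N5_a, N5_b => true
  | N5_b, N5_b => true
  | N5_c, N5_c => true
  | _, _ => false
  end.

Definition N5_join (x y : N5) : N5 :=
  if N5_le x y then y else if N5_le y x then x else N5_1.

Definition N5_meet (x y : N5) : N5 :=
  if N5_le x y then x else if N5_le y x then y else N5_0.

(* Pi~(G) contains a sublattice isomorphic to N5: an injective lattice
   homomorphism N5 -> Pi~(G) (classes represented by subgroups of G). *)
Definition has_N5_sublattice (gT : finGroupType) (G : {group gT}) : Prop :=
  exists f : N5 -> {group gT},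
    [/\ forall i, f i \subset G,
        forall i j, piE (f i) =i piE (f j) -> i = j,
        forall i j, isJoinPi G (f i) (f j) (f (N5_join i j)) &
        forall i j, isMeetPi G (f i) (f j) (f (N5_meet i j))].

(* In D_n = <x, y>, with x of order n and y an involution outside <x>, every
   element outside <x> has order 2. Hence a subgroup H has pi_e(H) = {d | d %| e},
   together with 2 when H is not contained in <x>, where e = |H :&: <x>|; every
   divisor e of n occurs with both choices. As (2, b) and (1, true) give the same
   set {1, 2}, the classes of Pi~(D_n) are coded by the pairs (e, b) with e %| n,
   e <> 2 and (2 %| e ==> b), ordered as a subposet of the distributive lattice
   natdvd * bool. Joins of codes are (lcmn, ||), and meets are (gcdn, &&) unless
   two codes have gcd 2. So if no two divisors of n other than 2 have gcd 2,
   Pi~(D_n) sits in a distributive lattice with the same joins and meets and has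
   no pentagon. Otherwise take such divisors e1 = 2m (m odd) and e2: the codes
   (1,true) < (m,true) < (e1,true) < (lcmn e1 e2,true) > (e2,true) > (1,true)
   form a pentagon, because the meet of (e1,true) and (e2,true) drops to (1,true).
   Such divisors exist exactly when 4p %| n or 2pq %| n for distinct odd primes
   p, q, that is when alpha >= 2, or alpha = 1 and k >= 2. *)

From mathcomp Require Import all_boot all_order all_fingroup all_solvable.

Set Implicit Arguments.
Unset Strict Implicit.
Unset Printing Implicit Defensive.

Import Order.Theory.

Section PreorderN5.
Variables (T : Type) (D : T -> Prop) (le : T -> T -> Prop).

Definition is_lub x y j :=
  [/\ le x j, le y j & forall z, D z -> le x z -> le y z -> le j z].

Definition is_glb x y m :=
  [/\ le m x, le m y & forall z, D z -> le z x -> le z y -> le z m].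

Definition preorder_has_N5 :=
  exists f : N5 -> T, [/\ forall i, D (f i),
    forall i j, le (f i) (f j) -> le (f j) (f i) -> i = j,
    forall i j, is_lub (f i) (f j) (f (N5_join i j)) &
    forall i j, is_glb (f i) (f j) (f (N5_meet i j))].

Hypotheses (le_refl : forall x, le x x)
  (le_trans : forall x y z, le x y -> le y z -> le x z).

Section Pentagon.
Variables o a b c i : T.
Hypotheses (Do : D o) (Da : D a) (Db : D b) (Dc : D c) (Di : D i).
Hypotheses (oa : le o a) (ab : le a b) (bi : le b i) (oc : le o c) (ci : le c i).
Hypotheses (lub_ac : forall z, D z -> le a z -> le c z -> le i z)
  (glb_bc : forall z, D z -> le z b -> le z c -> le z o).
Hypotheses (nba : ~ le b a) (ncb : ~ le c b).

Let ob : le o b := le_trans oa ab.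
Let ai : le a i := le_trans ab bi.
Let oi : le o i := le_trans ob bi.

Definition pentagon k :=
  match k with N5_0 => o | N5_a => a | N5_b => b | N5_c => c | N5_1 => i end.

Lemma pentagon_mono k l : N5_le k l -> le (pentagon k) (pentagon l).
Proof. by case: k; case: l => //= _; apply: le_refl. Qed.

Lemma pentagon_lub_bc z : D z -> le b z -> le c z -> le i z.
Proof. by move=> Dz bz; apply: lub_ac Dz (le_trans ab bz). Qed.

Lemma pentagon_glb_ac z : D z -> le z a -> le z c -> le z o.
Proof. by move=> Dz za; apply: glb_bc Dz (le_trans za ab). Qed.

Lemma pentagon_reflect k l : le (pentagon k) (pentagon l) -> N5_le k l.
Proof.
have bc_ba : le b c -> le b a by move/(glb_bc Db (le_refl b))/le_trans; apply.
have ac_bc : le a c -> le b c by move=> ac; apply: le_trans bi (lub_ac Dc ac (le_refl c)).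
case: k; case: l => //= kl; exfalso.
- exact/nba/bc_ba/ac_bc/(le_trans kl oc).
- exact/nba/bc_ba/ac_bc.
- exact/nba/(le_trans kl oa).
- exact/nba/bc_ba.
- exact/ncb/(le_trans kl ob).
- exact/ncb/(le_trans kl ab).
- exact/ncb/(le_trans ci (le_trans kl ob)).
- exact/ncb/(le_trans ci (le_trans kl ab)).
- exact/ncb/(le_trans ci kl).
- exact/nba/bc_ba/(le_trans bi kl).
Qed.

Lemma pentagon_lub k l : is_lub (pentagon k) (pentagon l) (pentagon (N5_join k l)).
Proof.
have lub_le k' l' : N5_le k' l' -> is_lub (pentagon k') (pentagon l') (pentagon l').
  by move/pentagon_mono=> kl; split=> // z _ _.
rewrite /N5_join; have [kl | nkl] := boolP (N5_le k l); first exact: lub_le.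
have [lk | nlk] := boolP (N5_le l k).
  by have [lk1 lk2 lk3] := lub_le _ _ lk; split=> // z Dz kz lz; apply: lk3.
case: k l nkl nlk => [] [] //= _ _; split=> // z Dz kz lz.
all: by [apply: lub_ac | apply: pentagon_lub_bc].
Qed.

Lemma pentagon_glb k l : is_glb (pentagon k) (pentagon l) (pentagon (N5_meet k l)).
Proof.
have glb_le k' l' : N5_le k' l' -> is_glb (pentagon k') (pentagon l') (pentagon k').
  by move/pentagon_mono=> kl; split=> // z _.
rewrite /N5_meet; have [kl | nkl] := boolP (N5_le k l); first exact: glb_le.
have [lk | nlk] := boolP (N5_le l k).
  by have [lk1 lk2 lk3] := glb_le _ _ lk; split=> // z Dz zk zl; apply: lk3.
case: k l nkl nlk => [] [] //= _ _; split=> // z Dz zk zl.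
all: by [apply: glb_bc | apply: pentagon_glb_ac].
Qed.

Lemma pentagon_has_N5 : preorder_has_N5.
Proof.
exists pentagon; split; [by case | | exact: pentagon_lub | exact: pentagon_glb].
by move=> k l /pentagon_reflect kl /pentagon_reflect lk; case: k l kl lk => [] [].
Qed.

End Pentagon.
End PreorderN5.

Lemma has_N5_sublatticeE (gT : finGroupType) (G : {group gT}) :
  has_N5_sublattice G <->
  preorder_has_N5 (fun H : {group gT} => H \subset G) (fun H K => piE_le H K).
Proof.
split=> -[f [sGf f_inj lub glb]]; exists f; split=> // i j.
  by move=> ij ji; apply: f_inj => d; apply/idP/idP; [apply: ij | apply: ji].
by move=> E; apply: f_inj => d; rewrite E.
Qed.

Section DistrLatticeN5.
Local Open Scope order_scope.

Lemma distrLattice_cancel disp (L : distrLatticeType disp) (x y z : L) :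
  x `|` z = y `|` z -> x `&` z = y `&` z -> x = y.
Proof.
move=> eU eI.
by rewrite -[x](joinKI z) eU meetUr eI [x `&` y]meetC -meetUr eU joinKI.
Qed.

Lemma distrLattice_no_N5 disp (L : distrLatticeType disp) (D : L -> Prop) :
  (forall x y, D x -> D y -> D (x `|` y)) ->
  (forall x y, D x -> D y -> D (x `&` y)) ->
  ~ preorder_has_N5 D (fun x y => x <= y).
Proof.
move=> DU DI [f [Df f_inj lub glb]].
have joinE k l : f (N5_join k l) = f k `|` f l.
  have [kj lj jmin] := lub k l; apply/le_anti; rewrite leUx kj lj !andbT.
  by apply: jmin; [apply: DU | exact: leUl | exact: leUr].
have meetE k l : f (N5_meet k l) = f k `&` f l.
  have [mk ml mmax] := glb k l; apply/le_anti; rewrite lexI mk ml andbT.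
  by apply: mmax; [apply: DI | exact: leIl | exact: leIr].
have fab : f N5_a = f N5_b.
  by apply: (@distrLattice_cancel _ _ _ _ (f N5_c)); rewrite -?joinE -?meetE.
by have := f_inj N5_a N5_b; rewrite fab lexx => /(_ isT isT).
Qed.

End DistrLatticeN5.

Lemma N5_choice (A : Type) (P : N5 -> A -> Prop) :
  (forall i, exists x, P i x) -> exists f : N5 -> A, forall i, P i (f i).
Proof.
move=> ex; have [x0 P0] := ex N5_0; have [xa Pa] := ex N5_a.
have [xb Pb] := ex N5_b; have [xc Pc] := ex N5_c; have [x1 P1] := ex N5_1.
exists (fun i => match i with
  N5_0 => x0 | N5_a => xa | N5_b => xb | N5_c => xc | N5_1 => x1 end).
by case.
Qed.

Section Transfer.
Variables (T1 T2 : Type) (D1 : T1 -> Prop) (D2 : T2 -> Prop).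
Variables (le1 : T1 -> T1 -> Prop) (le2 : T2 -> T2 -> Prop).
Variable R : T1 -> T2 -> Prop.
Hypotheses (R_total : forall x, D1 x -> exists2 y, D2 y & R x y)
  (R_onto : forall y, D2 y -> exists2 x, D1 x & R x y)
  (R_le : forall x y x' y', R x x' -> R y y' -> le1 x y <-> le2 x' y').

Lemma has_N5_transfer : preorder_has_N5 D1 le1 -> preorder_has_N5 D2 le2.
Proof.
case=> f [Df f_inj lub glb].
have [g Rfg] : exists g : N5 -> T2, forall i, D2 (g i) /\ R (f i) (g i).
  apply: (N5_choice (P := fun i y => D2 y /\ R (f i) y)) => i.
  by have [y] := R_total (Df i); exists y.
have le_fg i j : le1 (f i) (f j) <-> le2 (g i) (g j).
  exact: R_le (Rfg i).2 (Rfg j).2.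
have le_fz i z x : R x z -> le1 (f i) x <-> le2 (g i) z.
  exact: R_le (Rfg i).2.
have le_zf i z x : R x z -> le1 x (f i) <-> le2 z (g i).
  by move/R_le; apply; apply: (Rfg i).2.
exists g; split.
- by move=> i; case: (Rfg i).
- by move=> i j /le_fg ij /le_fg ji; apply: f_inj.
- move=> i j; have [ik jk kmin] := lub i j.
  split; try exact/le_fg.
  move=> z Dz iz jz; have [x Dx Rxz] := R_onto Dz.
  by apply/(le_fz _ _ _ Rxz)/kmin => //; apply/(le_fz _ _ _ Rxz).
- move=> i j; have [ki kj kmax] := glb i j.
  split; try exact/le_fg.
  move=> z Dz zi zj; have [x Dx Rxz] := R_onto Dz.
  by apply/(le_zf _ _ _ Rxz)/kmax => //; apply/(le_zf _ _ _ Rxz).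
Qed.

End Transfer.

Lemma has_N5_transfer_iff (T1 T2 : Type) (D1 : T1 -> Prop) (D2 : T2 -> Prop)
    (le1 : T1 -> T1 -> Prop) (le2 : T2 -> T2 -> Prop) (R : T1 -> T2 -> Prop) :
  (forall x, D1 x -> exists2 y, D2 y & R x y) ->
  (forall y, D2 y -> exists2 x, D1 x & R x y) ->
  (forall x y x' y', R x x' -> R y y' -> le1 x y <-> le2 x' y') ->
  preorder_has_N5 D1 le1 <-> preorder_has_N5 D2 le2.
Proof.
move=> R_total R_onto R_le; split; first exact: has_N5_transfer R_total R_onto R_le.
apply: (has_N5_transfer (R := fun y x => R x y)) => // y z y' z' Ry Rz.
exact: iff_sym (R_le _ _ _ _ Ry Rz).
Qed.

Definition pi_dih (c : nat * bool) : pred nat :=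
  [pred d | (d %| c.1) || c.2 && (d == 2)].

Definition reduced (c : nat * bool) := (c.1 != 2) && ((2 %| c.1) ==> c.2).

Definition reduce (c : nat * bool) := (if c.1 == 2 then 1 else c.1, c.2 || (2 %| c.1)).

(* Stated in natdvd *p bool so that lattice lemmas apply to codes as they are. *)
Definition le_code (c c' : nat * bool) := ((c : natdvd *p bool) <= c')%O.

Definition dih_code n (c : nat * bool) := (c.1 %| n) && reduced c.

Definition has_gcd2_divisors n :=
  exists e1 e2, [/\ e1 %| n, e2 %| n, e1 != 2, e2 != 2 & gcdn e1 e2 = 2].

Lemma le_codeE c c' : le_code c c' = (c.1 %| c'.1) && (c.2 ==> c'.2).
Proof. by case: c c' => [e b] [e' b']; rewrite /le_code leEprod; case: b; case: b'. Qed.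

Lemma le_code_refl c : le_code c c.
Proof. exact: lexx. Qed.

Lemma le_code_trans c1 c2 c3 : le_code c1 c2 -> le_code c2 c3 -> le_code c1 c3.
Proof. exact: le_trans. Qed.

Lemma dvdn2_neq2 d : d %| 2 -> d != 2 -> d = 1.
Proof. by case: d => [|[|[|d]]]. Qed.

Lemma reduce_reduced c : reduced (reduce c).
Proof.
case: c => e b; rewrite /reduced /=; have [-> // | e_neq2] := eqVneq e 2.
by rewrite e_neq2 /=; case: (2 %| e); rewrite ?orbT.
Qed.

Lemma pi_dih_reduce c : pi_dih (reduce c) =i pi_dih c.
Proof.
case: c => e b d; rewrite !inE /=; have [-> | e_neq2] := eqVneq e 2.
  rewrite dvdn1 dvdnn orbT andTb; have [-> // | d_neq2] := eqVneq d 2.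
  rewrite andbF !orbF; apply/idP/idP => [/eqP -> // | d2].
  by rewrite (dvdn2_neq2 d2 d_neq2).
have [-> | d_neq2] := eqVneq d 2; last by rewrite !andbF.
by rewrite !andbT; case: (2 %| e) => /=; rewrite ?orbF.
Qed.

Lemma reduce_dvdn c : (reduce c).1 %| c.1.
Proof. by rewrite /=; case: eqP => [-> | _]. Qed.

Lemma sub_pi_dih c c' : reduced c -> reduced c' ->
  {subset pi_dih c <= pi_dih c'} <-> le_code c c'.
Proof.
case: c c' => [e b] [e' b'] /andP[/= e_neq2 _] /andP[/= _ red']; rewrite le_codeE /=.
split=> [sub | /andP[ee' bb'] d].
  have /sub : e \in pi_dih (e, b) by rewrite inE dvdnn.
  rewrite inE /= (negbTE e_neq2) andbF orbF => -> /=.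
  apply/implyP=> bt; have /sub : 2 \in pi_dih (e, b) by rewrite inE /= bt orbT.
  by rewrite inE /= andbT => /orP[/(implyP red') | ].
rewrite !inE => /orP[de | /andP[bt ->]]; first by rewrite (dvdn_trans de ee').
by rewrite (implyP bb' bt) orbT.
Qed.

Lemma dih_code_join n c c' : dih_code n c -> dih_code n c' ->
  dih_code n (lcmn c.1 c'.1, c.2 || c'.2).
Proof.
case: c c' => [e b] [e' b'] /and3P[/= en e_neq2 red] /and3P[/= e'n e'_neq2 red'].
apply/and3P; split=> /=; first by rewrite dvdn_lcm en.
  apply/eqP=> l2; have dvd_l d : d %| lcmn e e' -> d != 2 -> d = 1.
    by rewrite l2; apply: dvdn2_neq2.
  by move: l2; rewrite (dvd_l e) ?dvdn_lcml // (dvd_l e') ?dvdn_lcmr.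
have l_dvd_ee' : lcmn e e' %| e * e' by rewrite dvdn_lcm dvdn_mulr ?dvdn_mull.
apply/implyP=> /(dvdn_trans)/(_ l_dvd_ee'); rewrite Euclid_dvdM //.
by case/orP=> [/(implyP red) | /(implyP red')] ->; rewrite ?orbT.
Qed.

Lemma dih_code_meet n c c' : ~ has_gcd2_divisors n ->
  dih_code n c -> dih_code n c' -> dih_code n (gcdn c.1 c'.1, c.2 && c'.2).
Proof.
move=> no_gcd2; case: c c' => [e b] [e' b'].
move=> /and3P[/= en e_neq2 red] /and3P[/= e'n e'_neq2 red'].
apply/and3P; split=> /=; first exact: dvdn_trans (dvdn_gcdl e e') en.
  by apply/eqP=> g2; apply: no_gcd2; exists e, e'.
by apply/implyP; rewrite dvdn_gcd => /andP[/(implyP red) -> /(implyP red') ->].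
Qed.

Lemma dih_codes_no_N5 n : ~ has_gcd2_divisors n ->
  ~ preorder_has_N5 (dih_code n) le_code.
Proof.
move=> no_gcd2; apply: (@distrLattice_no_N5 _ (natdvd *p bool)) => c c'.
  exact: dih_code_join.
exact: dih_code_meet.
Qed.

Lemma dih_codes_N5 n : 0 < n -> has_gcd2_divisors n ->
  preorder_has_N5 (dih_code n) le_code.
Proof.
move=> n_gt0 [e1 [e2 []]].
wlog e1_4 : e1 e2 / ~~ (4 %| e1).
  move=> gen e1n e2n e1_neq2 e2_neq2 g2.
  have [e14 | e1_4] := boolP (4 %| e1).
    apply: (gen e2 e1) => //; last by rewrite gcdnC.
    by apply/negP=> e24; have := dvdn_gcd 4 e1 e2; rewrite g2 e14 e24.
  exact: (gen e1 e2 e1_4 e1n e2n e1_neq2 e2_neq2 g2).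
move=> e1n e2n e1_neq2 e2_neq2 g2.
have [m e1E] : exists m, e1 = m * 2 by apply/dvdnP; rewrite -g2 dvdn_gcdl.
have m_odd : odd m.
  by move: e1_4; rewrite e1E -[4]/(2 * 2) dvdn_pmul2r // dvdn2 negbK.
have e1_gt0 : 0 < e1 := dvdn_gt0 n_gt0 e1n.
have m_gt1 : 1 < m by move: e1_gt0 e1_neq2; rewrite e1E; case: m {e1E m_odd} => [|[|]].
have m_e1 : m %| e1 by rewrite e1E dvdn_mulr.
have e1_gt2 : 2 < e1 by rewrite e1E -{1}[2]mul1n ltn_pmul2r.
have l_gt2 : 2 < lcmn e1 e2.
  apply: leq_trans e1_gt2 (dvdn_leq _ (dvdn_lcml _ _)).
  by rewrite lcmn_gt0 e1_gt0 (dvdn_gt0 n_gt0).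
apply: (pentagon_has_N5 le_code_refl le_code_trans
  (o := (1, true)) (a := (m, true)) (b := (e1, true)) (c := (e2, true))
  (i := (lcmn e1 e2, true))); rewrite /dih_code /reduced ?le_codeE /=.
all: rewrite ?implybT ?andbT ?dvd1n ?e1n ?e2n ?e1_neq2 ?e2_neq2 ?dvdn_lcml ?dvdn_lcmr //.
- by rewrite (dvdn_trans m_e1 e1n); apply: contraTneq m_odd => ->.
- by rewrite dvdn_lcm e1n e2n (gtn_eqF l_gt2).
- move=> [f b] /and3P[_ _ /= _]; rewrite !le_codeE /= => /andP[mf ->] /andP[e2f _].
  rewrite dvdn_lcm e2f e1E Gauss_dvd ?coprimen2 // mf.
  by rewrite (dvdn_trans _ e2f) // -g2 dvdn_gcdr.
- move=> [f b] /and3P[_ /= f_neq2 _]; rewrite !le_codeE /= !implybT !andbT => fe1 fe2.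
  by rewrite (dvdn2_neq2 _ f_neq2) // -g2 dvdn_gcd fe1.
- by move=> /(dvdn_leq (ltnW m_gt1)); rewrite e1E leqNgt ltn_Pmulr // ltnW.
- by move=> /gcdn_idPr; rewrite g2 => e2E; rewrite -e2E eqxx in e2_neq2.
Qed.

Section DihedralSubgroups.
Local Open Scope group_scope.

Lemma cyclic_orders (gT : finGroupType) (C : {group gT}) d :
  cyclic C -> d %| #|C| -> exists2 g, g \in C & #[g] = d.
Proof.
case/cyclicP=> z ->; rewrite -orderE => dz.
exists (z ^+ (#[z] %/ d)); first by rewrite mem_cycle.
by rewrite orderXdiv ?dvdn_div // divnA // mulKn.
Qed.

Variables (gT : finGroupType) (x y : gT) (n : nat).
Hypotheses (ox : #[x] = n) (oy : #[y] = 2) (notXy : y \notin <[x]>)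
  (xy : x ^ y = x^-1) (defG : <[x]> * <[y]> = [set: gT]).

Lemma order_mul_reflection a : a \in <[x]> -> #[a * y] = 2.
Proof.
move=> Xa; apply: nt_prime_order => //.
  have yV : y^-1 = y by rewrite invg_expg oy.
  have ayay : a * y * (a * y) = a * a ^ y by rewrite conjgE yV !mulgA.
  by rewrite expgS expg1 ayay; case/cycleP: Xa => i ->; rewrite conjXg xy expVgn mulgV.
apply: contra notXy => /eqP ay1.
by rewrite -(mulKg a y) ay1 mulg1 groupV.
Qed.

Lemma order_notin_cycle g : g \notin <[x]> -> #[g] = 2.
Proof.
have : g \in [set: gT] by rewrite inE.
rewrite -defG => /mulsgP[a c Xa]; rewrite (cycle2g oy) !inE => /orP[] /eqP -> ->.
  by rewrite mulg1 Xa.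
by move=> _; apply: order_mul_reflection.
Qed.

Lemma piE_dih (H : {group gT}) :
  piE H =i pi_dih (#|H :&: <[x]>|, ~~ (H \subset <[x]>)).
Proof.
have cycHX : cyclic (H :&: <[x]>) by apply: cyclicS (subsetIr _ _) (cycle_cyclic x).
move=> d; rewrite inE /=; apply/imageP/idP => [[g Hg ->] | ].
  have [Xg | nXg] := boolP (g \in <[x]>); first by rewrite order_dvdG // inE Hg Xg.
  rewrite order_notin_cycle // eqxx andbT; apply/orP; right.
  by apply/subsetPn; exists g.
case/orP=> [dHX | /andP[/subsetPn[g Hg nXg] /eqP ->]].
  by have [g /setIP[Hg _] <-] := cyclic_orders cycHX dHX; exists g.
by exists g; rewrite ?order_notin_cycle.
Qed.

Lemma dih_code_of_subgroup (H : {group gT}) : exists2 c, dih_code n c & piE H =i pi_dih c.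
Proof.
exists (reduce (#|H :&: <[x]>|, ~~ (H \subset <[x]>))); last first.
  by move=> d; rewrite pi_dih_reduce piE_dih.
rewrite /dih_code reduce_reduced andbT (dvdn_trans (reduce_dvdn _)) //=.
by rewrite -ox orderE cardSg // subsetIr.
Qed.

Lemma subgroup_of_dih_code c : dih_code n c -> exists H : {group gT}, piE H =i pi_dih c.
Proof.
case: c => e b /andP[/= en _].
have n_gt0 : 0 < n by rewrite -ox order_gt0.
pose K := <[x ^+ (n %/ e)]>%G.
have sKX : K \subset <[x]> by rewrite cycle_subG mem_cycle.
have oK : #|K| = e.
  by rewrite /= -orderE orderXdiv ox ?dvdn_div // divnA // mulKn // (dvdn_gt0 n_gt0 en).
case: b.
  have nKy : <[y]> \subset 'N(K) by rewrite norms_cycle conjXg xy expVgn groupV cycle_id.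
  exists (K <*> <[y]>)%G => d; rewrite piE_dih /= norm_joinEr //.
  have -> : K * <[y]> :&: <[x]> = K.
    by rewrite -group_modl // prime_TIg ?cycle_subG // -?orderE ?oy // mulg1.
  suff nsKyX : ~~ (K * <[y]> \subset <[x]>) by rewrite oK nsKyX.
  apply: contra notXy => /subsetP; apply.
  by have := mem_mulg (group1 K) (cycle_id y); rewrite mul1g.
by exists K => d; rewrite piE_dih (setIidPl sKX) sKX oK.
Qed.

End DihedralSubgroups.

Lemma dihedral_generators n : 1 < n -> exists x y : Dih n,
  [/\ #[x]%g = n, #[y]%g = 2, y \notin <[x]>%g, (x ^ y = x^-1)%g
    & (<[x]> * <[y]>)%g = [set: Dih n]].
Proof.
move=> n_gt1; have: [set: Dih n]%G \isog 'D_(n.*2) by exact: isog_refl.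
case/(isoGrpP _ (Grp_dihedral n_gt1)) => _.
have oG : #|[set: Dih n]| = n.*2 by exact: card_dihedral.
case/existsP=> -[x y] /= /eqP[defG xn y2 xy].
have{} defG : (<[x]> * <[y]>)%g = [set: Dih n].
  by rewrite -norm_joinEr // norms_cycle xy groupV cycle_id.
have n_lt_2n : n < n.*2 by rewrite -addnn -[X in X < _]addn0 ltn_add2l ltnW.
have notXy : y \notin <[x]>%g.
  apply: contraL n_lt_2n => Xy; rewrite -leqNgt -oG -defG mulGSid ?cycle_subG //.
  by rewrite dvdn_leq ?(ltnW n_gt1) // order_dvdn xn.
have oy : #[y]%g = 2 by apply: nt_prime_order (group1_contra notXy).
have TI : (<[x]> :&: <[y]>)%g = 1%g by rewrite setIC prime_TIg ?cycle_subG // -orderE oy.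
have ox : #[x]%g = n.
  have := TI_cardMg TI; rewrite defG oG -!orderE oy => card2.
  by apply/eqP; rewrite -(eqn_pmul2r (isT : 0 < 2)) -card2 muln2.
by exists x, y.
Qed.

Lemma dihedral_has_N5 n : 1 < n ->
  has_N5_sublattice [set: Dih n]%G <-> preorder_has_N5 (dih_code n) le_code.
Proof.
move=> n_gt1; have [x [y [ox oy notXy xy defG]]] := dihedral_generators n_gt1.
apply: iff_trans (has_N5_sublatticeE _) _.
pose R (H : {group Dih n}) c := dih_code n c /\ piE H =i pi_dih c.
apply: (has_N5_transfer_iff (R := R)).
- move=> H _; have [c Dc EH] := dih_code_of_subgroup ox oy notXy xy defG H.
  by exists c.
- move=> c Dc; have [H EH] := subgroup_of_dih_code ox oy notXy xy defG Dc.
  by exists H; rewrite ?subsetT.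
- move=> H K c c' [/andP[_ red] EH] [/andP[_ red'] EK].
  apply: iff_trans (sub_pi_dih red red').
  by split=> sub d; [rewrite -EH -EK | rewrite EH EK]; apply: sub.
Qed.

Lemma coprime_has_gcd2_divisors n a b : 1 < a -> 1 < b -> coprime a b ->
  2 * a %| n -> 2 * b %| n -> has_gcd2_divisors n.
Proof.
move=> a_gt1 b_gt1 co_ab an bn; exists (2 * a), (2 * b); split=> //.
- by rewrite -{2}[2]muln1 eqn_pmul2l // neq_ltn a_gt1 orbT.
- by rewrite -{2}[2]muln1 eqn_pmul2l // neq_ltn b_gt1 orbT.
by rewrite -muln_gcdr (eqP co_ab).
Qed.

Lemma odd_no_gcd2_divisors n : odd n -> ~ has_gcd2_divisors n.
Proof.
move=> n_odd [e1 [e2 [e1n _ _ _ g2]]].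
suff : 2 %| n by rewrite dvdn2 n_odd.
by rewrite (dvdn_trans _ e1n) // -g2 dvdn_gcdl.
Qed.

Lemma even_dvdn_2pfactor p t e : prime p ->
  e %| 2 * p ^ t -> 2 %| e -> e != 2 -> 2 * p %| e.
Proof.
move=> p_pr + /dvdnP[e' e_eq]; rewrite e_eq [e' * 2]mulnC dvdn_pmul2l //.
case/(dvdn_pfactor _ _ p_pr) => -[|j] _ ->; first by rewrite expn0 muln1 eqxx.
by rewrite dvdn_pmul2l // expnSr dvdn_mull.
Qed.

Lemma pfactor2_no_gcd2_divisors p t : prime p -> ~ has_gcd2_divisors (2 * p ^ t).
Proof.
move=> p_pr [e1 [e2 [e1n e2n e1_neq2 e2_neq2 g2]]].
have : 2 * p %| gcdn e1 e2.
  by rewrite dvdn_gcd !(even_dvdn_2pfactor (t := t) p_pr) // -g2 ?dvdn_gcdl ?dvdn_gcdr.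
rewrite g2 -{2}[2]muln1 dvdn_pmul2l // dvdn1 => /eqP p1.
by rewrite p1 in p_pr.
Qed.

Section Factorization.
Variables (alpha k : nat) (p t : 'I_k -> nat).
Hypotheses (k_gt0 : 0 < k) (p_odd_prime : forall i, prime (p i) /\ odd (p i))
  (p_inj : injective p) (t_gt0 : forall i, 0 < t i).

Let m := \prod_(i < k) p i ^ t i.
Let i0 : 'I_k := Ordinal k_gt0.

Let p_dvd_m i : p i %| m.
Proof. by rewrite /m (bigD1 i) //= dvdn_mulr // dvdn_exp. Qed.

Let m_odd : odd m.
Proof.
apply: (big_ind odd) => // [a b a_odd b_odd | i _]; first by rewrite oddM a_odd.
by rewrite oddX (p_odd_prime i).2 orbT.
Qed.

Lemma factorization_gt1 : 1 < 2 ^ alpha * m.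
Proof.
apply: leq_trans (prime_gt1 (p_odd_prime i0).1) _.
apply: dvdn_leq (dvdn_mull _ (p_dvd_m i0)).
by rewrite muln_gt0 expn_gt0 (odd_gt0 m_odd).
Qed.

Lemma factorization_gcd2_divisors :
  2 <= alpha \/ alpha = 1 /\ 2 <= k -> has_gcd2_divisors (2 ^ alpha * m).
Proof.
have p_gt1 i : 1 < p i := prime_gt1 (p_odd_prime i).1.
case=> [alpha_ge2 | [-> k_gt1]].
  apply: (@coprime_has_gcd2_divisors _ 2 (p i0)) => //.
  - by rewrite coprime2n (p_odd_prime i0).2.
  - by rewrite dvdn_mulr // (dvdn_exp2l 2 alpha_ge2).
  by rewrite dvdn_mul // (dvdn_exp2l 2 (ltnW alpha_ge2)).
pose i1 : 'I_k := Ordinal k_gt1.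
apply: (@coprime_has_gcd2_divisors _ (p i0) (p i1)); rewrite ?expn1 ?dvdn_pmul2l //.
rewrite prime_coprime ?dvdn_prime2 ?(p_odd_prime _).1 //.
by apply/eqP=> /p_inj /(congr1 val).
Qed.

Lemma factorization_cond_or_no_gcd2_divisors :
  (2 <= alpha \/ alpha = 1 /\ 2 <= k) \/ ~ has_gcd2_divisors (2 ^ alpha * m).
Proof.
case: alpha => [|[|alpha']]; [right | | by left; left].
  by apply: odd_no_gcd2_divisors; rewrite mul1n.
have [k_gt1 | k_le1] := ltnP 1 k; [by left; right | right].
have -> : m = p i0 ^ t i0.
  rewrite /m (bigD1 i0) //= big1 ?muln1 // => i /eqP[]; apply/val_inj.
  by apply/eqP; rewrite /= -leqn0 -ltnS (leq_trans (ltn_ord i)).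
exact: pfactor2_no_gcd2_divisors (p_odd_prime i0).1.
Qed.

End Factorization.

Theorem theorem2p9 (alpha k : nat) (p t : 'I_k -> nat) :
  (1 <= k)%N ->
  (forall i, prime (p i) /\ odd (p i)) ->
  injective p ->
  (forall i, 1 <= t i)%N ->
  let n := (2 ^ alpha * \prod_(i < k) p i ^ t i)%N in
  has_N5_sublattice [set: Dih n]%G <->
  ((2 <= alpha)%N \/ (alpha = 1%N /\ (2 <= k)%N)).
Proof.
move=> k_gt0 p_odd_prime p_inj t_gt0 n.
have n_gt1 : 1 < n := factorization_gt1 alpha k_gt0 p_odd_prime t_gt0.
apply: iff_trans (dihedral_has_N5 n_gt1) _; split=> [N5 | cond].
  have := factorization_cond_or_no_gcd2_divisors alpha t k_gt0 p_odd_prime.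
  by case=> // /dih_codes_no_N5.
apply: dih_codes_N5 (ltnW n_gt1) _.
exact: factorization_gcd2_divisors k_gt0 p_odd_prime p_inj t_gt0 cond.
Qed.
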